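(* For all integers $n \geq 1$, $r \geq 1$, and $k \geq 0$, \[\binom{k+r-1}{r-1}\left((k+r)^n - (n+1)(k+r-1)^n\right) \leq E_r(n,k) \leq \binom{k+r-1}{r-1}(k+r)^n.\]
   Context: The $r$th order Eulerian number $E_r(n,k)$ is the number of pairs $(w, S)$ with $w$ a permutation of $\{1, \ldots, n\}$ and $S \subset \{1, \ldots, n-1\}$ of size $r-1$ such that exactly $k$ indices $i \in \{1,\ldots,n-1\} \setminus S$ satisfy $w(i) > w(i+1)$. *)

From mathcomp Require Import all_boot all_order all_algebra all_fingroup.
Set Implicit Arguments. Unset Strict Implicit. Unset Printing Implicit Defensive.

(* Positions {1,...,n} are encoded 0-indexed as 'I_n; position i (0-indexed)
   corresponds to i+1 in the paper.  The index set {1,...,n-1} corresponds to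
   the i : 'I_n with i.+1 < n. *)

Definition descent_at (n : nat) (w : 'S_n) (i : 'I_n) : bool :=
  [exists j : 'I_n, (val j == (val i).+1) && (w j < w i)].

Definition eulerian_r (r n k : nat) : nat :=
  #|[set p : 'S_n * {set 'I_n} |
      [&& p.2 \subset [set i : 'I_n | (val i).+1 < n],
          #|p.2| == r.-1 &
          #|[set i : 'I_n | ((val i).+1 < n) && (i \notin p.2)
                           && descent_at p.1 i]| == k]]|.

From mathcomp Require Import all_boot all_order all_algebra all_fingroup.
From mathcomp Require Import zify.
Set Implicit Arguments. Unset Strict Implicit. Unset Printing Implicit Defensive.

(* Write m = k + r - 1.  A pair (w, S) counted by E_r(n, k) determines the set
   B = S ∪ Des(w) of m "bars" and is encoded by the function f with
   f(w(j)) = #{b ∈ B | b < j}, which maps [n] onto {0, ..., m}, together with the image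
   S' of S in {0, ..., m - 1}.  Along w the function f is weakly increasing, with unit
   jumps exactly at the bars, so w is the stable sort of f and (w, S) is recovered from
   (f, S'): there are at most (m + 1)^n C(m, r - 1) pairs.  Conversely (f, S') is the
   code of a pair as soon as f is onto and for no t < m do all preimages of t precede
   all preimages of t + 1, since then every jump of f along its stable sort that lies
   outside S' is a descent.  At most (m + 1) m^n functions are not onto, and an onto f
   with such a t arises from an onto function with m values by splitting one of its
   level sets at a non-first element, so there are at most (n - m) m^n of them.  When
   m >= n the lower bound already follows from (m + 1)^n <= (n + 1) m^n. *)

Lemma card_ord_lt n j : j <= n -> #|[set i : 'I_n | i < j]| = j.
Proof.
move=> le_jn; rewrite -sum1_card (eq_bigl (fun i : 'I_n => i < j)) => [|i].
  by rewrite (big_ord_narrow le_jn) sum_nat_const card_ord muln1.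
by rewrite inE.
Qed.

Lemma leq_card_bigcup (I T : finType) (P : pred I) (F : I -> {set T}) :
  #|\bigcup_(i | P i) F i| <= \sum_(i | P i) #|F i|.
Proof.
elim/big_rec2: _ => [|i A s _ IH]; first by rewrite cards0.
by rewrite (leq_trans (leq_card_setU _ _)) // leq_add2l.
Qed.

Lemma expSn_leq N m : N <= m -> m.+1 ^ N <= N.+1 * m ^ N.
Proof.
elim: N => [|N IH] le_Nm; first by rewrite !expn0.
rewrite expnS (leq_trans (leq_mul (leqnn _) (IH (ltnW le_Nm)))) //.
rewrite expnS !mulnA leq_mul2r; apply/orP; right; nia.
Qed.

Section SortByKey.
Variables (n : nat) (key : 'I_n -> nat).
Hypothesis key_inj : injective key.

Definition key_rank x := #|[set y | key y < key x]|.

Lemma key_rank_lt x : key_rank x < n.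
Proof.
rewrite -[X in _ < X]card_ord -cardsT; apply: proper_card; apply/properP.
by split; [exact: subsetT | exists x; rewrite !inE ?ltnn].
Qed.

Lemma key_rank_ltE x y : (key_rank x < key_rank y) = (key x < key y).
Proof.
have rank_sub z t : key z <= key t ->
    [set u | key u < key z] \subset [set u | key u < key t].
  by move=> le_zt; apply/subsetP => u; rewrite !inE => /leq_trans; apply.
case: (ltnP (key x) (key y)) => [lt_xy | le_yx].
  apply: proper_card; apply/properP; split; first exact/rank_sub/ltnW.
  by exists x; rewrite !inE ?ltnn.
by apply/negbTE; rewrite -leqNgt; apply/subset_leq_card/rank_sub.
Qed.

Lemma key_rank_inj : injective key_rank.
Proof.
move=> x y eq_xy; apply: key_inj; apply/eqP.
by rewrite eqn_leq !(leqNgt (key _)) -!key_rank_ltE eq_xy ltnn.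
Qed.

Definition key_rank_ord x : 'I_n := Ordinal (key_rank_lt x).

Lemma key_rank_ord_inj : injective key_rank_ord.
Proof. by move=> x y /(congr1 val)/key_rank_inj. Qed.

Definition sort_perm : 'S_n := (perm key_rank_ord_inj)^-1.

Lemma key_rank_sort_perm i : key_rank (sort_perm i) = i.
Proof. by have := permKV (perm key_rank_ord_inj) i; rewrite permE => /(congr1 val). Qed.

Lemma sort_perm_ltE i j : (key (sort_perm i) < key (sort_perm j)) = (i < j).
Proof. by rewrite -key_rank_ltE !key_rank_sort_perm. Qed.

Lemma sort_permE (w : 'S_n) :
  {homo w : i j / i < j >-> key i < key j} -> sort_perm = w.
Proof.
move=> w_homo; have w_mono i j : (key (w i) < key (w j)) = (i < j).
  case: (ltngtP i j) => [/w_homo // | /w_homo/ltnW | /val_inj ->]; last exact: ltnn.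
  by rewrite leqNgt => /negbTE.
apply/permP => j; apply: key_rank_ord_inj; apply: val_inj => /=.
rewrite key_rank_sort_perm /key_rank -[in LHS](card_ord_lt (ltnW (ltn_ord j))).
rewrite -(card_imset _ (@perm_inj _ w)); apply: eq_card => y.
by rewrite -[y](permKV w) mem_imset ?inE ?w_mono //; apply: perm_inj.
Qed.

End SortByKey.

Section Below.
Variables (n : nat) (B : {set 'I_n}).

Definition below (j : nat) := #|[set b in B | b < j]|.

Lemma below_le_card j : below j <= #|B|.
Proof. by apply/subset_leq_card/subsetP => b; rewrite inE => /andP[]. Qed.

Lemma belowS (i : 'I_n) : below i.+1 = below i + (i \in B).
Proof.
rewrite /below; case: (boolP (i \in B)) => Bi.
  rewrite (_ : [set b in B | b < i.+1] = i |: [set b in B | b < i]).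
    by rewrite cardsU1 !inE ltnn andbF addnC.
  apply/setP => b; rewrite !inE ltnS leq_eqVlt val_eqE.
  by case: (eqVneq b i) => [-> | _]; rewrite ?Bi.
rewrite addn0; apply: eq_card => b; rewrite !inE ltnS leq_eqVlt val_eqE.
by case: (eqVneq b i) => [-> | _]; rewrite ?(negbTE Bi).
Qed.

Lemma below_lt (b : 'I_n) j : b \in B -> b < j -> below b < below j.
Proof.
move=> Bb lt_bj; apply: proper_card; apply/properP; split.
  by apply/subsetP => c; rewrite !inE => /andP[-> /ltn_trans]; apply.
by exists b; rewrite !inE ?Bb ?lt_bj ?ltnn.
Qed.

Lemma below_inj : {in B &, injective (fun b : 'I_n => below b)}.
Proof.
move=> b c Bb Bc eq_bc; apply: val_inj.
by case: (ltngtP b c) => // [/(below_lt Bb) | /(below_lt Bc)]; rewrite eq_bc ltnn.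
Qed.

End Below.

Definition descents n (w : 'S_n) := [set i : 'I_n | (i.+1 < n) && descent_at w i].

Lemma descent_atE n (w : 'S_n.+1) (i : 'I_n.+1) : i < n ->
  descent_at w i = (w (inord i.+1) < w i).
Proof.
move=> lt_in; apply/existsP/idP => [[j /andP[/eqP j_val]] | ].
  by have <- : j = inord i.+1 by rewrite -j_val inord_val.
by exists (inord i.+1); rewrite /= inordK // eqxx.
Qed.

Section StableSort.
Variables (n m : nat) (f : {ffun 'I_n -> 'I_m}).

Definition lex_key x := f x * n + x.

Lemma lex_key_ltE x y :
  (lex_key x < lex_key y) = (f x < f y) || ((f x == f y :> nat) && (x < y)).
Proof.
rewrite /lex_key; have := ltn_ord x; have := ltn_ord y.
by case: (ltngtP (f x) (f y)) => /= cmp_xy; nia.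
Qed.

Lemma lex_key_inj : injective lex_key.
Proof.
move=> x y; rewrite /lex_key => eq_xy; apply: val_inj => /=.
by have := ltn_ord x; have := ltn_ord y; case: (ltngtP (f x) (f y)) => cmp_xy; nia.
Qed.

Definition stable_sort : 'S_n := sort_perm lex_key_inj.
Local Notation w := stable_sort.

Lemma stable_sort_ltE (i j : 'I_n) : (lex_key (w i) < lex_key (w j)) = (i < j).
Proof. exact: sort_perm_ltE. Qed.

Lemma stable_sort_homo (i j : 'I_n) : i <= j -> f (w i) <= f (w j).
Proof.
rewrite leq_eqVlt => /orP[/eqP/val_inj -> // | ].
by rewrite -stable_sort_ltE lex_key_ltE => /orP[/ltnW | /andP[/eqP ->]].
Qed.

Lemma stable_sort_lt (i j : 'I_n) : f (w i) < f (w j) -> i < j.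
Proof. by apply: contraTT; rewrite -!leqNgt; apply: stable_sort_homo. Qed.

Lemma stable_sort_tie (i j : 'I_n) : f (w i) = f (w j) -> i <= j -> w i <= w j.
Proof.
move=> eq_f; rewrite leq_eqVlt => /orP[/eqP/val_inj -> // | ].
by rewrite -stable_sort_ltE lex_key_ltE eq_f ltnn eqxx => /ltnW.
Qed.

End StableSort.

Definition onto (aT rT : finType) (f : {ffun aT -> rT}) := [forall t, [exists x, f x == t]].

Lemma ontoP (aT rT : finType) (f : {ffun aT -> rT}) :
  reflect (forall t, exists x, f x = t) (onto f).
Proof.
apply: (iffP forallP) => [f_onto t | f_onto t].
  by have /existsP[x /eqP f_x] := f_onto t; exists x.
by have [x f_x] := f_onto t; apply/existsP; exists x; rewrite f_x.
Qed.

Definition separated n m (f : {ffun 'I_n -> 'I_m}) (t : nat) :=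
  [forall x, forall y, (f x == t :> nat) && (f y == t.+1 :> nat) ==> (x < y)].

Section SortedSurjection.
Variables (n m : nat) (f : {ffun 'I_n.+1 -> 'I_m.+1}).
Local Notation w := (stable_sort f).

Definition ascents := [set j : 'I_n.+1 | (j < n) && (f (w j) < f (w (inord j.+1)))].

Lemma ascents_bound j : j \in ascents -> j < n.
Proof. by rewrite inE => /andP[]. Qed.

Lemma descents_sub_ascents : descents w \subset ascents.
Proof.
apply/subsetP => i; rewrite !inE ltnS => /andP[lt_in]; rewrite lt_in descent_atE //=.
have : i < (inord i.+1 : 'I_n.+1) by rewrite inordK.
rewrite -(stable_sort_ltE f) lex_key_ltE => /orP[// | /andP[_ lt_w]] lt_w'.
by have := ltn_trans lt_w lt_w'; rewrite ltnn.
Qed.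

Hypothesis f_onto : forall t, exists x, f x = t.

Lemma sorted_succ j : j < n ->
  f (w (inord j.+1)) = f (w (inord j)) + (inord j \in ascents) :> nat.
Proof.
move=> lt_jn; have le_jSn := ltnW lt_jn.
have le_fw : f (w (inord j)) <= f (w (inord j.+1)).
  by apply: stable_sort_homo; rewrite !inordK.
have step : f (w (inord j.+1)) <= (f (w (inord j))).+1.
  rewrite leqNgt; apply/negP => jump.
  have lt_m : (f (w (inord j))).+1 < m.+1 := leq_trans jump (ltnW (ltn_ord _)).
  have [x f_x] := f_onto (Ordinal lt_m); rewrite -[x](permKV w) in f_x.
  case: (leqP ((w^-1)%g x) (inord j : 'I_n.+1)) => [/(stable_sort_homo f) | lt_j].
    by rewrite f_x /= ltnn.
  have /(stable_sort_homo f) : (inord j.+1 : 'I_n.+1) <= (w^-1)%g x.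
    by move: lt_j; rewrite !inordK.
  by rewrite f_x /= leqNgt jump.
rewrite inE inordK // lt_jn /=.
by case: ltngtP le_fw step => //=; lia.
Qed.

Lemma sorted_below (j : 'I_n.+1) : f (w j) = below ascents j :> nat.
Proof.
rewrite -[j in LHS]inord_val; case: j => j /=; elim: j => [_ | j IH lt_jn].
  have [x f_x] := f_onto ord0; rewrite -[x](permKV w) in f_x.
  have /(stable_sort_homo f) : (inord 0 : 'I_n.+1) <= (w^-1)%g x by rewrite inordK.
  by rewrite f_x leqn0 => /eqP ->; apply/esym/eq_card0 => b; rewrite !inE ltn0 andbF.
rewrite sorted_succ // IH 1?ltnW //.
by have := belowS ascents (inord j : 'I_n.+1); rewrite inordK 1?ltnW.
Qed.

Lemma ascents_next j : j \in ascents -> f (w (inord j.+1)) = (f (w j)).+1 :> nat.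
Proof.
move=> asc_j; have lt_jn := ascents_bound asc_j.
by rewrite sorted_succ // inord_val asc_j addn1.
Qed.

Lemma ascents_lt j : j \in ascents -> f (w j) < m.
Proof.
by move=> /ascents_next next_j; have := ltn_ord (f (w (inord j.+1))); rewrite next_j.
Qed.

Lemma ascents_card : #|ascents| = m.
Proof.
have below_max : below ascents (@ord_max n) = #|ascents|.
  apply: eq_card => b; rewrite [in LHS]inE /=.
  by apply/andP/idP => [[] // | asc_b]; split; last exact: ascents_bound.
have [x f_x] := f_onto ord_max; rewrite -[x](permKV w) in f_x.
have := @stable_sort_homo _ _ f _ ord_max (leq_ord ((w^-1)%g x)); rewrite f_x /=.
rewrite -below_max -sorted_below => le_m.
by apply/eqP; rewrite eqn_leq le_m -ltnS ltn_ord.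
Qed.

Lemma sorted_ascents_inj : {in ascents &, injective (fun j => f (w j))}.
Proof.
move=> i j asc_i asc_j /(congr1 val); rewrite /= !sorted_below.
exact: below_inj.
Qed.

Lemma sorted_ascents_img : [set f (w j) | j in ascents] = [set t : 'I_m.+1 | t < m].
Proof.
apply/eqP; rewrite eqEcard; apply/andP; split.
  by apply/subsetP => t /imsetP[j asc_j ->]; rewrite inE ascents_lt.
by rewrite card_ord_lt // card_in_imset ?ascents_card //; apply: sorted_ascents_inj.
Qed.

Lemma ascent_descent j :
  j \in ascents -> ~~ separated f (f (w j)) -> j \in descents w.
Proof.
move=> asc_j; have lt_jn := ascents_bound asc_j.
have next_j := ascents_next asc_j.
case/forallPn => x /forallPn[y]; rewrite negb_imply -leqNgt.
case/andP => /andP[/eqP f_x /eqP f_y] le_yx.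
rewrite -[x](permKV w) in f_x le_yx; rewrite -[y](permKV w) in f_y le_yx.
have le_xj : (w^-1)%g x <= j.
  rewrite -ltnS -[j.+1](@inordK n j.+1) //; apply: (@stable_sort_lt _ _ f _ (inord j.+1)).
  by rewrite f_x next_j.
have le_jy : (inord j.+1 : 'I_n.+1) <= (w^-1)%g y.
  by rewrite inordK //; apply: (stable_sort_lt (f := f)); rewrite f_y ltnSn.
have := stable_sort_tie (val_inj f_x) le_xj.
have := stable_sort_tie (val_inj (etrans next_j (esym f_y))) le_jy.
rewrite !permKV in le_yx *; rewrite inE ltnS lt_jn descent_atE //= ltn_neqAle => le1 le2.
rewrite (leq_trans le1 (leq_trans le_yx le2)) andbT.
by apply/negP => /eqP/val_inj/perm_inj/(congr1 val) /=; rewrite inordK //; lia.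
Qed.

End SortedSurjection.

Definition eulerian_pairs r n k := [set p : 'S_n * {set 'I_n} |
  [&& p.2 \subset [set i : 'I_n | (val i).+1 < n],
      #|p.2| == r.-1 &
      #|[set i : 'I_n | ((val i).+1 < n) && (i \notin p.2) && descent_at p.1 i]| == k]].

Lemma eulerian_rE r n k : eulerian_r r n k = #|eulerian_pairs r n k|.
Proof. by []. Qed.

Lemma descents_setD n (w : 'S_n) (S : {set 'I_n}) :
  [set i : 'I_n | ((val i).+1 < n) && (i \notin S) && descent_at w i] = descents w :\: S.
Proof. by apply/setP => i; rewrite !inE andbCA andbA. Qed.

Definition bars n (p : 'S_n * {set 'I_n}) := p.2 :|: descents p.1.

Definition encode m n (p : 'S_n * {set 'I_n}) : {ffun 'I_n -> 'I_m.+1} * {set 'I_m.+1} :=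
  ([ffun x => inord (below (bars p) ((p.1^-1)%g x))],
   [set inord (below (bars p) s) | s : 'I_n in p.2]).

Definition decode n m (q : {ffun 'I_n.+1 -> 'I_m.+1} * {set 'I_m.+1}) :=
  (stable_sort q.1, [set j in ascents q.1 | q.1 (stable_sort q.1 j) \in q.2]).

Definition draws m r :=
  [set A : {set 'I_m.+1} | (A \subset [set t : 'I_m.+1 | t < m]) && (#|A| == r.-1)].

Lemma card_draws m r : #|draws m r| = 'C(m, r.-1).
Proof. by rewrite cards_draws card_ord_lt. Qed.

Definition codes N m r := setX [set: {ffun 'I_N -> 'I_m.+1}] (draws m r).

Lemma card_codes N m r : #|codes N m r| = m.+1 ^ N * 'C(m, r.-1).
Proof. by rewrite cardsX cardsT card_ffun !card_ord card_draws. Qed.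

Section EulerianPair.
Variables (r k n : nat) (p : 'S_n * {set 'I_n}).
Hypothesis p_in : p \in eulerian_pairs r n k.

Lemma card_bars : #|bars p| = k + r.-1.
Proof.
move: p_in; rewrite inE => /and3P[_ /eqP card_S /eqP card_D].
rewrite descents_setD in card_D.
rewrite /bars cardsU setIC -addnBA ?subset_leq_card ?subsetIl // -cardsD.
by rewrite card_S card_D addnC.
Qed.

Lemma bars_bound b : b \in bars p -> b.+1 < n.
Proof.
move: p_in; rewrite inE => /and3P[/subsetP sub_S _ _].
by rewrite inE => /orP[/sub_S | ]; rewrite inE // => /andP[].
Qed.

Lemma below_bars_lt j : below (bars p) j < (k + r.-1).+1.
Proof. by rewrite ltnS -card_bars below_le_card. Qed.

End EulerianPair.

Section EncodePair.
Variables (r k n : nat) (p : 'S_n.+1 * {set 'I_n.+1}).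
Hypothesis p_in : p \in eulerian_pairs r n.+1 k.
Local Notation m := (k + r.-1).
Local Notation f := (encode m p).1.

Lemma encode_sorted j : f (p.1 j) = below (bars p) j :> nat.
Proof. by rewrite ffunE permK inordK // (below_bars_lt p_in). Qed.

Lemma encode_key_step j : j < n ->
  lex_key f (p.1 (inord j)) < lex_key f (p.1 (inord j.+1)).
Proof.
move=> lt_jn; have lt_jSn := ltnW lt_jn.
have := belowS (bars p) (inord j); rewrite inordK // => below_Sj.
rewrite lex_key_ltE !encode_sorted !inordK // below_Sj.
case: (boolP (inord j \in bars p)) => [_ | bars_j]; first by rewrite addn1 ltnSn.
have : inord j \notin descents p.1 by apply: contra bars_j => D_j; rewrite inE D_j orbT.
rewrite addn0 eqxx ltnn inE inordK // ltnS lt_jn descent_atE ?inordK // -leqNgt.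
rewrite leq_eqVlt => /orP[/eqP/val_inj/perm_inj/(congr1 val) | //].
by rewrite /= !inordK // => /n_Sn.
Qed.

Lemma encode_key_homo : {homo p.1 : i j / i < j >-> lex_key f i < lex_key f j}.
Proof.
pose g i := lex_key f (p.1 (inord i)).
have : {in [pred i | i < n.+1] &, {homo g : i j / i < j}}.
  apply: homo_ltn_in => [y x z | i j _ /[!inE] lt_j l /andP[_ lt_lj] | i _ /[!inE]].
  - exact: ltn_trans.
  - exact: ltn_trans lt_lj lt_j.
  - exact: encode_key_step.
by move=> g_homo i j /(g_homo i j (ltn_ord i) (ltn_ord j)); rewrite /g !inord_val.
Qed.

Lemma stable_sort_encode : stable_sort f = p.1.
Proof. exact: sort_permE encode_key_homo. Qed.

Lemma ascents_encode : ascents f = bars p.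
Proof.
apply/setP => j; rewrite inE stable_sort_encode.
case: (ltnP j n) => [lt_jn | le_nj].
  rewrite !encode_sorted inordK // belowS.
  by case: (j \in bars p); rewrite ?addn1 ?ltnSn ?addn0 ?ltnn.
apply/esym/negP => /(bars_bound p_in); rewrite ltnS => le_jn.
by have := leq_trans le_jn le_nj; rewrite ltnn.
Qed.

Lemma decode_encode : decode (encode m p) = p.
Proof.
rewrite /decode stable_sort_encode ascents_encode [RHS]surjective_pairing /=.
congr pair; apply/setP => j; rewrite inE.
have S_bars s : s \in p.2 -> s \in bars p by rewrite inE => ->.
apply/andP/idP => [[bars_j /imsetP[s S_s]] | S_j].
  move/(congr1 (@nat_of_ord _)); rewrite encode_sorted inordK ?(below_bars_lt p_in) //.
  by move/(below_inj bars_j (S_bars _ S_s)) ->.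
split; first exact: S_bars.
by apply/imsetP; exists j => //; rewrite ffunE permK.
Qed.

Lemma encode_code : encode m p \in codes n.+1 m r.
Proof.
have below_S s : s \in p.2 -> below (bars p) s < m.
  move=> S_s; have bars_s : s \in bars p by rewrite inE S_s.
  rewrite -(card_bars p_in); apply: leq_trans (below_lt bars_s (ltnSn s)) _.
  exact: below_le_card.
have := p_in; rewrite inE => /and3P[_ /eqP card_S _].
rewrite !inE /=; apply/andP; split.
  apply/subsetP => t /imsetP[s S_s ->].
  by rewrite inE inordK ?(below_bars_lt p_in) ?below_S.
rewrite card_in_imset ?card_S // => s s' S_s S_s' /(congr1 (@nat_of_ord _)).
rewrite !inordK ?(below_bars_lt p_in) //.
by apply: below_inj; rewrite inE ?S_s ?S_s'.
Qed.

End EncodePair.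

Lemma card_eulerian_pairs_le r k n :
  #|eulerian_pairs r n.+1 k| <= (k + r.-1).+1 ^ n.+1 * 'C(k + r.-1, r.-1).
Proof.
have encode_inj : {in eulerian_pairs r n.+1 k &, injective (@encode (k + r.-1) n.+1)}.
  by move=> p p' p_in p'_in eq_pp'; rewrite -(decode_encode p_in) eq_pp' decode_encode.
rewrite -card_codes -(card_in_imset encode_inj).
by apply/subset_leq_card/subsetP => q /imsetP[p p_in ->]; apply: encode_code.
Qed.

Section DecodeCode.
Variables (r k n : nat).
Local Notation m := (k + r.-1).
Variables (f : {ffun 'I_n.+1 -> 'I_m.+1}) (S' : {set 'I_m.+1}).
Hypothesis f_onto : forall t, exists x, f x = t.
Hypotheses (S'_sub : S' \subset [set t : 'I_m.+1 | t < m]) (card_S' : #|S'| = r.-1).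
Hypothesis f_gaps : forall t : 'I_m.+1, t < m -> t \notin S' -> ~~ separated f t.
Local Notation w := (stable_sort f).
Local Notation S := (decode (f, S')).2.

Lemma decode_sub_ascents : S \subset ascents f.
Proof. by apply/subsetP => j; rewrite inE => /andP[]. Qed.

Lemma decode_img : [set f (w j) | j in S] = S'.
Proof.
apply/setP => t; apply/imsetP/idP => [[j] | S'_t].
  by rewrite inE => /andP[_ S'_fj] ->.
have : t \in [set f (w j) | j in ascents f].
  by rewrite sorted_ascents_img //; apply: (subsetP S'_sub).
by case/imsetP => j asc_j t_fj; exists j; rewrite // inE asc_j -t_fj.
Qed.

Lemma card_decode : #|S| = r.-1.
Proof.
rewrite -[RHS]card_S' -[in RHS]decode_img card_in_imset // => i j.
move=> /(subsetP decode_sub_ascents) asc_i /(subsetP decode_sub_ascents).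
exact: sorted_ascents_inj.
Qed.

Lemma descents_decode : descents w :\: S = ascents f :\: S.
Proof.
apply/setP => j; rewrite !in_setD; case: (boolP (j \in S)) => //= S_j.
apply/idP/idP => [| asc_j]; first exact: (subsetP (descents_sub_ascents f)).
apply: (ascent_descent f_onto asc_j); apply: f_gaps; first exact: ascents_lt.
by apply: contra S_j => S'_fj; rewrite inE asc_j.
Qed.

Lemma bars_decode : bars (decode (f, S')) = ascents f.
Proof.
apply/setP => j; rewrite /bars in_setU; case: (boolP (j \in S)) => S_j /=.
  by rewrite (subsetP decode_sub_ascents).
by have /setP/(_ j) := descents_decode; rewrite !in_setD S_j.
Qed.

Lemma decode_in_pairs : decode (f, S') \in eulerian_pairs r n.+1 k.
Proof.
rewrite inE descents_setD /= descents_decode card_decode eqxx /=; apply/andP; split.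
  by apply/subsetP => j /(subsetP decode_sub_ascents) /ascents_bound; rewrite inE ltnS.
by rewrite cardsDS ?decode_sub_ascents // ascents_card // card_decode addnK.
Qed.

Lemma encode_decode : encode m (decode (f, S')) = (f, S').
Proof.
rewrite /encode bars_decode /=; congr pair.
  by apply/ffunP => x; rewrite ffunE -sorted_below // permKV inord_val.
rewrite -[RHS]decode_img; apply: eq_in_imset => j S_j.
by rewrite -sorted_below ?inord_val.
Qed.

End DecodeCode.

Lemma card_avoiding n m (v : 'I_m.+1) :
  #|[set f : {ffun 'I_n -> 'I_m.+1} | [forall x, f x != v]]| = m ^ n.
Proof.
rewrite -[RHS](_ : #|@ffun_on 'I_n (predC1 v)| = m ^ n); last first.
  by rewrite card_ffun_on cardC1 !card_ord.
apply: eq_card => f; rewrite inE.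
by apply/forallP/ffun_onP => f_v x; have := f_v x; rewrite !inE.
Qed.

Lemma card_not_onto n m :
  #|[set f : {ffun 'I_n -> 'I_m.+1} | ~~ onto f]| <= m.+1 * m ^ n.
Proof.
have sub_avoiding : [set f : {ffun 'I_n -> 'I_m.+1} | ~~ onto f] \subset
    \bigcup_(v : 'I_m.+1) [set f : {ffun 'I_n -> 'I_m.+1} | [forall x, f x != v]].
  apply/subsetP => f; rewrite inE negb_forall => /existsP[v /existsPn f_v].
  by apply/bigcupP; exists v; rewrite // inE; apply/forallP.
apply: leq_trans (subset_leq_card sub_avoiding) _; apply: leq_trans (leq_card_bigcup _ _) _.
by under eq_bigr do rewrite card_avoiding; rewrite sum_nat_const card_ord.
Qed.

Definition repeats N m (g : {ffun 'I_N -> 'I_m}) :=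
  [set x : 'I_N | [exists y : 'I_N, (y < x) && (g y == g x)]].

Lemma card_repeats N m (g : {ffun 'I_N -> 'I_m}) :
  (forall t, exists x, g x = t) -> #|repeats g| = N - m.
Proof.
move=> g_onto; have g_inj : {in ~: repeats g &, injective g}.
  move=> x y; rewrite !inE !negb_exists => /forallP x_first /forallP y_first eq_g.
  apply: val_inj; case: (ltngtP x y) => // [lt_xy | lt_yx].
    by have := y_first x; rewrite lt_xy eq_g eqxx.
  by have := x_first y; rewrite lt_yx eq_g eqxx.
suff card_first : #|~: repeats g| = m by rewrite (cardsCs (repeats g)) card_first card_ord.
rewrite -(card_in_imset g_inj) -[in RHS](card_ord m) -cardsT; apply: eq_card => t.
rewrite in_setT; apply/imsetP; have [x0 g_x0] := g_onto t.
have g_x0' : g x0 == t by rewrite g_x0.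
have [x /eqP g_x x_min] := @arg_minnP _ x0 (fun x => g x == t) (@nat_of_ord N) g_x0'.
exists x; last by rewrite g_x.
rewrite !inE negb_exists; apply/forallP => y; apply/negP => /andP[lt_yx /eqP g_y].
by have := x_min y; rewrite g_y g_x eqxx => /(_ isT); rewrite leqNgt lt_yx.
Qed.

Lemma separatedP n m (f : {ffun 'I_n -> 'I_m}) t :
  reflect (forall x y, f x = t :> nat -> f y = t.+1 :> nat -> x < y) (separated f t).
Proof.
apply: (iffP forallP) => [sep x y f_x f_y | sep x].
  by have /forallP/(_ y) := sep x; rewrite f_x f_y !eqxx.
by apply/forallP => y; apply/implyP => /andP[/eqP f_x /eqP f_y]; apply: sep.
Qed.

Definition separable n m (f : {ffun 'I_n -> 'I_m.+1}) :=
  [exists t : 'I_m.+1, (t < m) && separated f t].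

Definition split_at N m (g : {ffun 'I_N -> 'I_m.+1}) (x : 'I_N) : {ffun 'I_N -> 'I_m.+2} :=
  [ffun y => inord (g y + ((g x < g y) || ((g y == g x) && (x <= y))))].

Definition merge_at N m (f : {ffun 'I_N -> 'I_m.+2}) (t : nat) : {ffun 'I_N -> 'I_m.+1} :=
  [ffun y => inord (f y - (t < f y))].

Section MergeSplit.
Variables (N m : nat) (f : {ffun 'I_N -> 'I_m.+2}) (t : nat).
Hypotheses (lt_t : t < m.+1) (f_onto : forall s, exists x, f x = s).
Hypothesis f_sep : separated f t.
Local Notation g := (merge_at f t).

Lemma merge_atE y : g y = f y - (t < f y) :> nat.
Proof.
rewrite ffunE inordK //; have := ltn_ord (f y).
by case: (ltnP t (f y)) => /= [lt_tf | le_ft] lt_f; lia.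
Qed.

Lemma merge_onto s : exists y, g y = s.
Proof.
have lt_s := ltn_ord s; have [lt_st | le_ts] := ltnP s t.
  have [y f_y] := f_onto (inord s); exists y; apply: val_inj.
  by rewrite /= merge_atE f_y inordK ?ltnNge ?(ltnW lt_st) ?subn0 //; lia.
have [y f_y] := f_onto (inord s.+1); exists y; apply: val_inj.
by rewrite /= merge_atE f_y inordK ?ltnS ?le_ts ?subn1.
Qed.

Lemma split_merge : exists2 x, x \in repeats g & split_at g x = f.
Proof.
have [x0 f_x0] := f_onto (inord t.+1).
have f_x0' : f x0 == t.+1 :> nat by rewrite f_x0 inordK.
have [x /eqP f_x x_min] :=
  @arg_minnP _ x0 (fun x => f x == t.+1 :> nat) (@nat_of_ord N) f_x0'.
have g_x : g x = t :> nat by rewrite merge_atE f_x ltnSn subn1.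
have sep := separatedP _ _ f_sep.
exists x.
  have [y f_y] := f_onto (inord t); have {}f_y : f y = t :> nat by rewrite f_y inordK; lia.
  rewrite inE; apply/existsP; exists y; rewrite sep //=; apply/eqP/val_inj.
  by rewrite /= g_x merge_atE f_y ltnn subn0.
apply/ffunP => y; apply: val_inj => /=; rewrite ffunE inordK; last first.
  by have := ltn_ord (g y); case: (_ || _); lia.
rewrite -val_eqE /= merge_atE g_x.
case: (ltngtP (f y) t) => [lt_ft | lt_tf | eq_ft].
- by rewrite subn0 ltnNge (ltnW lt_ft) (ltn_eqF lt_ft) addn0.
- case: (ltngtP (f y) t.+1) => [ | lt_Stf | eq_fSt]; first lia.
    by rewrite subn1 (_ : t < (f y).-1) /=; lia.
  by rewrite eq_fSt subn1 /= ltnn eqxx x_min ?eq_fSt ?addn1.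
- by rewrite subn0 eq_ft ltnn eqxx /= leqNgt sep ?addn0.
Qed.

End MergeSplit.

Lemma card_separable N M :
  #|[set f : {ffun 'I_N -> 'I_M.+1} | onto f && separable f]| <= (N - M) * M ^ N.
Proof.
case: M => [|m].
  suff -> : [set f : {ffun 'I_N -> 'I_1} | onto f && separable f] = set0 by rewrite cards0.
  apply/setP => f; rewrite !inE andbC /separable.
  by case: existsP => // -[t]; rewrite ltn0.
have sub_split : [set f : {ffun 'I_N -> 'I_m.+2} | onto f && separable f] \subset
    \bigcup_(g : {ffun 'I_N -> 'I_m.+1} | onto g) (split_at g @: repeats g).
  apply/subsetP => f; rewrite inE => /andP[/ontoP f_onto /existsP[t /andP[lt_t f_sep]]].
  have [x rep_x <-] := split_merge lt_t f_onto f_sep.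
  by apply/bigcupP; exists (merge_at f t); [apply/ontoP/merge_onto | apply: imset_f].
apply: leq_trans (subset_leq_card sub_split) _; apply: leq_trans (leq_card_bigcup _ _) _.
apply: (@leq_trans (\sum_(g : {ffun 'I_N -> 'I_m.+1} | onto g) #|repeats g|)).
  by apply: leq_sum => g _; apply: leq_imset_card.
rewrite (eq_bigr (fun _ => N - m.+1)) => [|g /ontoP]; last exact: card_repeats.
rewrite sum_nat_const mulnC leq_mul2l; apply/orP; right.
by apply: leq_trans (max_card _) _; rewrite card_ffun !card_ord.
Qed.

Definition good_codes N m r := [set q in codes N m r | onto q.1 && ~~ separable q.1].

Lemma card_good_codes_le r k n :
  #|good_codes n.+1 (k + r.-1) r| <= #|eulerian_pairs r n.+1 k|.
Proof.
apply: leq_trans (leq_imset_card (@encode (k + r.-1) n.+1) _); apply/subset_leq_card/subsetP.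
move=> [f S']; rewrite !inE /= => /and3P[/andP[S'_sub /eqP card_S'] /ontoP f_onto].
move/existsPn => not_sep.
have f_gaps (t : 'I_(k + r.-1).+1) : t < k + r.-1 -> t \notin S' -> ~~ separated f t.
  by move=> lt_tm _; have := not_sep t; rewrite lt_tm.
apply/imsetP; exists (decode (f, S')); first exact: decode_in_pairs f_gaps.
by rewrite encode_decode.
Qed.

Lemma card_eulerian_pairs_ge r k n :
  (k + r.-1).+1 ^ n.+1 * 'C(k + r.-1, r.-1) <=
  #|eulerian_pairs r n.+1 k| + n.+2 * (k + r.-1) ^ n.+1 * 'C(k + r.-1, r.-1).
Proof.
set m := k + r.-1; have [le_Snm | lt_mSn] := leqP n.+1 m.
  by apply: leq_trans (leq_addl _ _); rewrite leq_mul2r expSn_leq ?orbT.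
set not_onto := [set f : {ffun 'I_n.+1 -> 'I_m.+1} | ~~ onto f].
set onto_separable := [set f : {ffun 'I_n.+1 -> 'I_m.+1} | onto f && separable f].
have codes_sub : codes n.+1 m r \subset good_codes n.+1 m r :|: setX not_onto (draws m r)
    :|: setX onto_separable (draws m r).
  apply/subsetP => -[f S']; rewrite !inE /= => ->.
  by case: (onto f); case: (separable f).
have not_onto_le : #|setX not_onto (draws m r)| <= m.+1 * m ^ n.+1 * 'C(m, r.-1).
  by rewrite cardsX card_draws leq_mul2r card_not_onto orbT.
have separable_le : #|setX onto_separable (draws m r)| <=
    (n.+1 - m) * m ^ n.+1 * 'C(m, r.-1).
  by rewrite cardsX card_draws leq_mul2r card_separable orbT.
rewrite -card_codes; apply: leq_trans (subset_leq_card codes_sub) _.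
apply: leq_trans (leq_card_setU _ _) _.
apply: leq_trans (leq_add (leq_card_setU _ _) (leqnn _)) _.
apply: leq_trans (leq_add (leq_add (card_good_codes_le r k n) not_onto_le) separable_le) _.
by rewrite -addnA -!mulnDl (_ : m.+1 + (n.+1 - m) = n.+2) //; lia.
Qed.

(* Otherwise [n] and [r] would become implicit arguments of [lemma2p7]. *)
Unset Implicit Arguments.
Import Order.TTheory GRing.Theory Num.Theory.

Theorem lemma2p7 (n r k : nat) (hn : 1 <= n) (hr : 1 <= r) :
  (('C(k + r - 1, r - 1))%:Z * (((k + r) ^ n)%:Z - (n.+1 * (k + r - 1) ^ n)%:Z)
     <= (eulerian_r r n k)%:Z)%R
  /\ eulerian_r r n k <= 'C(k + r - 1, r - 1) * (k + r) ^ n.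
Proof.
case: n hn => [//|n] _.
have -> : k + r - 1 = k + r.-1 by lia.
have -> : r - 1 = r.-1 by lia.
have -> : k + r = (k + r.-1).+1 by lia.
have upper := card_eulerian_pairs_le r k n; have lower := card_eulerian_pairs_ge r k n.
rewrite eulerian_rE; split; last by rewrite mulnC.
by rewrite mulrBr -!PoszM lerBlDr -PoszD lez_nat; lia.
Qed.
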